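(* Let $\mathcal{A}$ and $\mathcal{U}$ be Banach algebras, $\theta$ a nonzero character on $\mathcal{A}$, $\mathcal{X}$ a Banach $(\mathcal{A}\times_{\theta}\mathcal{U})$-bimodule, and $D:\mathcal{A}\times_{\theta}\mathcal{U}\to\mathcal{X}$ a derivation; let $\delta_1(a)=D((a,0))$ and $\delta_2(u)=D((0,u))$. Then: (i) if $\mathrm{ann}_{\mathcal{X}}\mathcal{U}=\{0\}$, or $\mathcal{U}$ has a left (or right) bounded approximate identity for $\mathcal{X}$, then $\delta_1$ is continuous; (ii) if $Z_{\mathcal{X}}(\mathcal{A})=\{0\}$, then $\delta_2:\mathcal{U}\to\mathcal{X}$ is continuous; if in addition $\mathrm{ann}_{\mathcal{X}}\mathcal{U}=\{0\}$, then every derivation $D:\mathcal{A}\times_{\theta}\mathcal{U}\to\mathcal{X}$ is continuous.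
   Context: The Lau product $\mathcal{A}\times_{\theta}\mathcal{U}$ is $\mathcal{A}\times\mathcal{U}$ with norm $\|(a,u)\|=\|a\|+\|u\|$ and product $(a,u)(a',u')=(aa',\theta(a)u'+\theta(a')u+uu')$. A Banach $(\mathcal{A}\times_{\theta}\mathcal{U})$-bimodule $\mathcal{X}$ is an $\mathcal{A}$-bimodule via $ax=(a,0)x$, $xa=x(a,0)$ and a $\mathcal{U}$-bimodule via $ux=(0,u)x$, $xu=x(0,u)$. $\mathrm{ann}_{\mathcal{X}}\mathcal{U}=\{x: ux=xu=0\ \forall u\in\mathcal{U}\}$; $Z_{\mathcal{X}}(\mathcal{A})=\{x: ax=xa\ \forall a\in\mathcal{A}\}$. A left (resp. right) bounded approximate identity for $\mathcal{X}$ in $\mathcal{U}$ is a bounded net $(e_\alpha)\subseteq\mathcal{U}$ with $e_\alpha x\to x$ (resp. $xe_\alpha\to x$) for all $x\in\mathcal{X}$. *)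

From mathcomp Require Import all_boot all_order all_algebra.
From mathcomp Require Export complex.
From mathcomp Require Export all_classical all_reals all_analysis.
Export numFieldNormedType.Exports.
Import Order.TTheory GRing.Theory Num.Theory.

Set Implicit Arguments.
Unset Strict Implicit.
Unset Printing Implicit Defensive.

Local Open Scope ring_scope.

Section LauDefs.
Context {R : realType}.
Local Notation C := (R[i]).

Definition is_banach_algebra (A : completeNormedModType C) (mul : A -> A -> A) : Prop :=
  associative mul /\
  (forall (c : C) a b, mul (c *: a) b = c *: mul a b) /\
  (forall (c : C) a b, mul a (c *: b) = c *: mul a b) /\
  left_distributive mul +%R /\
  right_distributive mul +%R /\
  (forall a b, `|mul a b| <= `|a| * `|b|).

Definition is_nonzero_character (A : completeNormedModType C) (mul : A -> A -> A)
    (theta : A -> C) : Prop :=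
  [/\ forall (c : C) a b, theta (c *: a + b) = c * theta a + theta b,
      forall a b, theta (mul a b) = theta a * theta b &
      exists a, theta a != 0 ].

Section Lau.
Variables (A U : completeNormedModType C) (mulA : A -> A -> A) (mulU : U -> U -> U)
  (theta : A -> C).

Definition lau_mul (p q : A * U) : A * U :=
  (mulA p.1 q.1, theta p.1 *: q.2 + theta q.1 *: p.2 + mulU p.2 q.2).

Definition lau_norm (p : A * U) : C := `|p.1| + `|p.2|.

Definition lau_lc (c : C) (p q : A * U) : A * U := (c *: p.1 + q.1, c *: p.2 + q.2).

Variables (X : completeNormedModType C) (lact : A * U -> X -> X) (ract : X -> A * U -> X).

Definition is_lau_banach_bimodule : Prop :=
  (forall (c : C) p q x, lact (lau_lc c p q) x = c *: lact p x + lact q x) /\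
      (forall (c : C) p x y, lact p (c *: x + y) = c *: lact p x + lact p y) /\
      (forall (c : C) p q x, ract x (lau_lc c p q) = c *: ract x p + ract x q) /\
      (forall (c : C) p x y, ract (c *: x + y) p = c *: ract x p + ract y p) /\
      (forall p q x, lact (lau_mul p q) x = lact p (lact q x)) /\
      (forall p q x, ract x (lau_mul p q) = ract (ract x p) q) /\
      (forall p q x, lact p (ract x q) = ract (lact p x) q) /\
      (forall p x, `|lact p x| <= lau_norm p * `|x|) /\
      (forall p x, `|ract x p| <= lau_norm p * `|x|).

Definition is_lau_derivation (D : A * U -> X) : Prop :=
  (forall (c : C) p q, D (lau_lc c p q) = c *: D p + D q) /\
  (forall p q, D (lau_mul p q) = ract (D p) q + lact p (D q)).

Definition ann_X_U (x : X) : Prop :=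
  forall u : U, lact (0, u) x = 0 /\ ract x (0, u) = 0.

Definition Z_X_A (x : X) : Prop :=
  forall a : A, lact (a, 0) x = ract x (a, 0).

Definition directed_set (I : Type) (le : I -> I -> Prop) : Prop :=
  [/\ inhabited I,
      forall i, le i i,
      forall i j k, le i j -> le j k -> le i k &
      forall i j, exists k, le i k /\ le j k ].

Definition has_left_bai_for_X : Prop :=
  exists (I : Type) (le : I -> I -> Prop) (e : I -> U),
    [/\ directed_set le,
        exists M : C, forall i, `|e i| <= M &
        forall (x : X) (eps : C), 0 < eps ->
          exists i0, forall i, le i0 i -> `|lact (0, e i) x - x| < eps ].

Definition has_right_bai_for_X : Prop :=
  exists (I : Type) (le : I -> I -> Prop) (e : I -> U),
    [/\ directed_set le,
        exists M : C, forall i, `|e i| <= M &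
        forall (x : X) (eps : C), 0 < eps ->
          exists i0, forall i, le i0 i -> `|ract x (0, e i) - x| < eps ].

End Lau.
End LauDefs.

(* Automatic continuity comes from the closed graph theorem, in the form: a
   linear map f is continuous as soon as S_i \o f is continuous for a family of
   continuous maps S_i vanishing at 0 and separating the points.
   Applying D to (a,0)(0,u) = (0,u)(a,0) = (0, theta(a) u) gives
     delta1(a) (0,u) = theta(a) delta2(u) - (a,0) delta2(u),
     (0,u) delta1(a) = theta(a) delta2(u) - delta2(u) (a,0),
   so, since |theta(a)| <= |a|, delta1 followed by multiplication by a fixed u
   on either side is bounded.  These multiplications separate the points of X
   when ann_X U = 0, and so do the one-sided multiplications by a bounded
   approximate identity.  Subtracting the two identities bounds
   (a,0) delta2(u) - delta2(u) (a,0) by 2 |delta1(a)| |u|, and the maps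
   x |-> (a,0) x - x (a,0) separate points when Z_X(A) = 0.  Finally
   D(a,u) = delta1(a) + delta2(u). *)

From HB Require Import structures.
From mathcomp Require Import all_boot all_order all_algebra.
From mathcomp Require Import complex.
From mathcomp Require Import all_classical all_reals all_analysis.
From mathcomp Require Import ring lra.
Import numFieldNormedType.Exports.
Import Order.TTheory GRing.Theory Num.Theory.

Set Implicit Arguments.
Unset Strict Implicit.
Unset Printing Implicit Defensive.

Local Open Scope classical_set_scope.
Local Open Scope ring_scope.
Local Open Scope complex_scope.

Definition linear_of (K : pzRingType) (V W : lmodType K) (f : V -> W)
    (f_lin : linear f) : {linear V -> W} :=
  HB.pack f (GRing.isLinear.Build K V W *:%R f f_lin).

Lemma linear_le_continuous (K : numFieldType) (V W : normedModType K)
    (f : V -> W) (k : K) :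
  linear f -> 0 <= k -> (forall x, `|f x| <= k * `|x|) -> continuous f.
Proof.
move=> f_lin k_ge0 f_le.
apply: (@bounded_linear_continuous _ _ _ (linear_of f_lin)).
apply/linear_boundedP; near=> r => x.
apply: le_trans (f_le x) _; apply: ler_wpM2r => //.
by near: r; apply: nbhs_pinfty_ge; rewrite ger0_real.
Unshelve. all: by end_near. Qed.

Lemma linear_comp (K : pzRingType) (V W Y : lmodType K) (f : V -> W) (g : W -> Y) :
  linear f -> linear g -> linear (g \o f).
Proof. by move=> f_lin g_lin c x y /=; rewrite f_lin g_lin. Qed.

Lemma ler_norm_scaleB (K : numDomainType) (V : normedModType K) (c k : K) (x y : V) :
  `|c| <= k -> `|y| <= k * `|x| -> `|c *: x - y| <= (`|x| *+ 2) * k.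
Proof.
move=> c_le y_le; apply: le_trans (ler_normB _ _) _.
by rewrite normrZ mulr2n mulrDl [_ * k]mulrC lerD // ler_wpM2r.
Qed.

(* Baire's theorem and the convergence of absolutely convergent series are
   available over a realType only, so a complex Banach space is also viewed as
   a real one, with the same norm and topology. *)
Section Realification.
Variables (R : realType) (V : completeNormedModType R[i]).

Definition realified : Type := V.

HB.instance Definition _ := GRing.Zmodule.on realified.
HB.instance Definition _ := Choice.on realified.

Definition realified_scale (r : R) (v : realified) : realified := r%:C *: (v : V).

Fact realified_scaleA a b v :
  realified_scale a (realified_scale b v) = realified_scale (a * b) v.
Proof. by rewrite /realified_scale scalerA rmorphM. Qed.

Fact realified_scale1 : left_id 1 realified_scale.
Proof. by move=> v; rewrite /realified_scale scale1r. Qed.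

Fact realified_scaleDr : right_distributive realified_scale +%R.
Proof. by move=> a u v; rewrite /realified_scale scalerDr. Qed.

Fact realified_scaleDl v : {morph realified_scale^~ v : a b / a + b}.
Proof. by move=> a b; rewrite /realified_scale rmorphD scalerDl. Qed.

HB.instance Definition _ := GRing.Zmodule_isLmodule.Build R realified
  realified_scaleA realified_scale1 realified_scaleDr realified_scaleDl.

Definition realified_norm (v : realified) : R := complex.Re `|v : V|.

Lemma realified_normE (v : realified) : (realified_norm v)%:C = `|v : V|.
Proof. by rewrite /realified_norm RRe_real // realE normr_ge0. Qed.

Fact realified_normD x y :
  realified_norm (x + y) <= realified_norm x + realified_norm y.
Proof. by rewrite -lecR rmorphD /= !realified_normE ler_normD. Qed.

Fact realified_normZ (r : R) (x : realified) :
  realified_norm (r *: x) = `|r| * realified_norm x.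
Proof.
apply: complexI; rewrite rmorphM /= !realified_normE normrZ.
by rewrite normc_def /= expr0n addr0 sqrtr_sqr.
Qed.

Fact realified_norm_eq0 (x : realified) : realified_norm x = 0 -> x = 0.
Proof.
by move=> x0; apply/eqP; rewrite -normr_eq0 -realified_normE x0.
Qed.

HB.instance Definition _ := Lmodule_isNormed.Build R realified
  realified_normD realified_normZ realified_norm_eq0.

Lemma realified_ball (x : realified) (e : R) : ball x e = ball (x : V) e%:C.
Proof.
rewrite -!ball_normE; apply/seteqP; split => y /=;
  by rewrite -ltcR realified_normE.
Qed.

Lemma realified_nbhs (x : realified) : nbhs x = nbhs (x : V).
Proof.
apply/funext => P; apply/propext; rewrite !nbhs_ballP; split.
  case=> e e0 xeP; exists e%:C; last by rewrite -realified_ball.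
  by move: e0; rewrite /= -(ltcR 0).
case=> e /= e0 xeP; have e_real : e \is Num.real by rewrite gtr0_real.
exists (complex.Re e); first by rewrite /= -(ltcR 0) RRe_real.
by rewrite realified_ball RRe_real.
Qed.

Lemma realified_cvgE (T : Type) (F : set_system T) (v : T -> V) (x : V) :
  (v @ F --> (x : realified)) = (v @ F --> x).
Proof. by rewrite /cvg_to realified_nbhs. Qed.

Fact realified_complete (F : set_system realified) :
  ProperFilter F -> cauchy F -> cvg F.
Proof.
move=> FF /cauchy_ballP F_cauchy.
have /cauchy_ballP/cauchy_cvg/cvg_ex[l Fl] : cauchy_ball (F : set_system V).
  move=> e e0; have e_real : e \is Num.real by rewrite gtr0_real.
  have := F_cauchy (complex.Re e); rewrite -(ltcR 0) RRe_real // => /(_ e0).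
  by apply: filterS => -[x y]; rewrite /= realified_ball RRe_real.
by apply/cvg_ex; exists (l : realified) => P; rewrite realified_nbhs => /Fl.
Qed.

HB.instance Definition _ := Uniform_isComplete.Build realified realified_complete.

End Realification.

(* For linear f this says that the graph of f is closed. *)
Definition seq_closed_graph (K : numDomainType) (V W : normedModType K)
    (f : V -> W) : Prop :=
  forall (v : nat -> V) (y : W), v @ \oo --> 0 -> f \o v @ \oo --> y -> y = 0.

Section ClosedGraph.
Variables (K : realType) (V W : completeNormedModType K) (f : {linear V -> W}).

Lemma sublevel_closure_ball : exists (n : nat) (x0 : V) (r : K),
  0 < r /\ ball x0 r `<=` closure [set x | `|f x| <= n%:R].
Proof.
pose S (n : nat) := [set x : V | `|f x| <= n%:R].
have [n Sn_ndense] : exists n, ~ dense (~` closure (S n)).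
  apply: contrapT => all_dense.
  have /(_ setT) : dense (\bigcap_n ~` closure (S n)).
    apply: Baire => n; split; first exact/closed_openC/closed_closure.
    by apply: contrapT => n_dense; apply: all_dense; exists n.
  case=> [|| x [_ /(_ (Num.truncn `|f x|).+1 I)]]; [by exists 0 | exact: openT |].
  by apply; apply: subset_closure; rewrite /S /= ltW // truncnS_gt.
case: (denseNE Sn_ndense) => O [[x0 /open_nbhs_nbhs/nbhs_ballP[r r_gt0 ball_O]]].
move=> O_cl.
exists n, x0, r; split => // x /ball_O Ox.
by apply: contrapT => x_ncl; rewrite -[False]/(set0 x) -O_cl.
Qed.

Lemma sublevel_approx : exists M : K, 0 <= M /\
  forall z e, 0 < e -> exists s, `|f s| <= M * `|z| /\ `|z - s| < e.
Proof.
have [n [x0 [r [r_gt0 ball_cl]]]] := sublevel_closure_ball.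
have approx_ball x : ball x0 r x -> forall e, 0 < e ->
    exists s, `|f s| <= n%:R /\ `|x - s| < e.
  move=> x0rx e e_gt0.
  have [s [fs xs]] := ball_cl x x0rx (ball x e) (nbhsx_ballx _ _ e_gt0).
  by exists s; split => //; move: xs; rewrite -ball_normE.
have approx_small w : `|w| < r -> forall e, 0 < e ->
    exists s, `|f s| <= 2 * n%:R /\ `|w - s| < e.
  move=> w_lt e e_gt0; have e2_gt0 : 0 < e / 2 by rewrite divr_gt0.
  have [|s1 [fs1 s1_near]] := approx_ball (x0 + w) _ _ e2_gt0.
    by rewrite -ball_normE /= opprD addNKr normrN.
  have [|s2 [fs2 s2_near]] := approx_ball x0 _ _ e2_gt0; first exact: ballxx.
  exists (s1 - s2); split.
    by rewrite raddfB (le_trans (ler_normB _ _)) // mulr2n mulrDl mul1r lerD.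
  have -> : w - (s1 - s2) = (x0 + w - s1) - (x0 - s2).
    by rewrite -[x0 + w - s1]addrA !opprD !opprK addrACA subrr add0r addrA.
  by apply: le_lt_trans (ler_normB _ _) _; rewrite [e]splitr ltrD.
exists (4 * n%:R / r); split => [|z e e_gt0].
  by rewrite divr_ge0 ?mulr_ge0 // ltW.
have [->|z_neq0] := eqVneq z 0.
  by exists 0; rewrite raddf0 !normr0 mulr0 subrr normr0.
have z_gt0 : 0 < `|z| by rewrite normr_gt0.
pose t := r / (2 * `|z|); have t_gt0 : 0 < t by rewrite divr_gt0 ?mulr_gt0.
have [|s [fs zs]] := approx_small (t *: z) _ (t * e) (mulr_gt0 t_gt0 e_gt0).
  have -> : `|t *: z| = r / 2 by rewrite normrZ gtr0_norm // /t; field; rewrite gt_eqF.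
  lra.
exists (t^-1 *: s); split.
  rewrite linearZ normrZ gtr0_norm ?invr_gt0 //.
  have -> : 4 * n%:R / r * `|z| = t^-1 * (2 * n%:R).
    by rewrite /t invf_div; field; rewrite gt_eqF.
  by rewrite ler_wpM2l // invr_ge0 ltW.
have -> : z - t^-1 *: s = t^-1 *: (t *: z - s).
  by rewrite scalerBr scalerA mulVf ?gt_eqF // scale1r.
rewrite normrZ gtr0_norm ?invr_gt0 // -(ltr_pM2l t_gt0).
by rewrite mulrA mulfV ?gt_eqF // mul1r.
Qed.

Hypothesis f_closed : seq_closed_graph f.

Lemma closed_graph_ball_bound : exists M : K, forall z, `|z| <= 1 -> `|f z| <= M.
Proof.
have [M [M_ge0 f_approx]] := sublevel_approx.
pose h : K := 2^-1.
have h_gt0 : 0 < h by rewrite invr_gt0.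
have h_lt1 : `|h| < 1 by rewrite gtr0_norm // invf_lt1 // ltr1n.
exists (limn (series (geometric M h))) => z z_le1.
(* z = \sum_k s_k with `|f s_k| <= M 2^-k, and the closedness of the graph
   identifies f z with \sum_k f s_k. *)
have /choice[s s_approx] : forall wk : V * nat,
    exists s, `|f s| <= M * `|wk.1| /\ `|wk.1 - s| < h ^+ wk.2.+1.
  by move=> [w k]; apply: f_approx; rewrite exprn_gt0.
pose fix zs k := if k is k'.+1 then zs k' - s (zs k', k') else z.
have zs_le k : `|zs k| <= h ^+ k.
  by case: k => [|k]; [rewrite expr0 | exact/ltW/(s_approx (zs k, k)).2].
pose u k := f (s (zs k, k)).
have u_le k : `|u k| <= geometric M h k.
  exact: le_trans (s_approx (zs k, k)).1 (ler_wpM2l M_ge0 (zs_le k)).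
have series_u N : series u N = f z - f (zs N).
  elim: N => [|N IH]; first by rewrite /series /= big_geq // subrr.
  by rewrite seriesSr IH /= raddfB opprB addrA addrAC.
have u_normed_cvg : cvgn (series (fun k => `|u k|)).
  apply: (series_le_cvg _ _ u_le) (is_cvg_geometric_series (a := M) h_lt1) => k //.
  by rewrite /geometric /= mulr_ge0 // exprn_ge0 // ltW.
have u_cvg := normed_cvg u_normed_cvg.
have -> : f z = limn (series u).
  apply/eqP; rewrite -subr_eq0; apply/eqP; apply: (f_closed (v := zs)).
    apply/cvgr0Pnorm_lt => e e_gt0.
    have /cvgr0Pnorm_lt/(_ e e_gt0) := cvg_expr h_lt1; apply: filterS => k.
    by apply: le_lt_trans; rewrite (le_trans (zs_le k)) // ler_norm.
  have -> : f \o zs = fun N => f z - series u N.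
    by apply/funext => N; rewrite series_u opprB addrC subrK.
  exact: cvgB (cvg_cst _) u_cvg.
apply: le_trans (lim_series_norm u_normed_cvg) _.
exact: lim_series_le (is_cvg_geometric_series (a := M) h_lt1) u_le.
Qed.

Theorem closed_graph_continuous : continuous f.
Proof.
have [M f_le] := closed_graph_ball_bound.
apply: bounded_linear_continuous; apply/ex_bound; exists M.
apply/nbhs_ballP; exists 1 => [|z]; first exact: ltr01.
rewrite -ball_normE /= sub0r normrN.
by move/ltW; exact: f_le.
Qed.

End ClosedGraph.

Section ComplexClosedGraph.
Variables (R : realType) (V W : completeNormedModType R[i]).

Theorem complex_closed_graph_continuous (f : {linear V -> W}) :
  seq_closed_graph f -> continuous f.
Proof.
move=> f_closed x.
pose g : {linear realified V -> realified W} :=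
  @linear_of _ (realified V) (realified W) f (fun r => linearP f r%:C).
have g_cont : continuous g.
  apply: closed_graph_continuous => v y v0 gvy.
  by apply: (f_closed v); [move: v0 | move: gvy]; rewrite realified_cvgE.
by have := g_cont x; rewrite /continuous_at /cvg_to !realified_nbhs.
Qed.

Lemma separating_continuous (Y : normedModType R[i]) (I : Type)
    (S : I -> W -> Y) (f : V -> W) :
  linear f -> (forall i, continuous (S i)) -> (forall i, S i 0 = 0) ->
  (forall w, (forall i, S i w = 0) -> w = 0) ->
  (forall i, continuous (S i \o f)) -> continuous f.
Proof.
move=> f_lin S_cont S0 S_sep Sf_cont.
apply: (complex_closed_graph_continuous (f := linear_of f_lin)) => v y v0 fvy.
apply: S_sep => i.
have Sfv_y : (S i \o (f \o v)) @ \oo --> S i y.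
  exact: continuous_cvg _ (S_cont i y) fvy.
have Sfv_0 : ((S i \o f) \o v) @ \oo --> 0.
  rewrite -(S0 i) -(linear0 (linear_of f_lin)).
  exact: continuous_cvg _ (Sf_cont i 0) v0.
exact: cvg_unique Sfv_y Sfv_0.
Qed.

End ComplexClosedGraph.

Section BanachAlgebra.
Variables (R : realType) (A : completeNormedModType R[i]) (mul : A -> A -> A).
Hypothesis mul_banach : is_banach_algebra mul.

Lemma banach_mul0r b : mul 0 b = 0.
Proof.
by case: mul_banach => _ [mulZl _]; have := mulZl 0 0 b; rewrite !scale0r.
Qed.

Lemma banach_mulr0 a : mul a 0 = 0.
Proof.
by case: mul_banach => _ [_ [mulZr _]]; have := mulZr 0 a 0; rewrite !scale0r.
Qed.

Lemma banach_mulrB a x y : mul a (x - y) = mul a x - mul a y.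
Proof.
case: mul_banach => _ [_ [mulZr [_ [mulDr _]]]].
by rewrite mulDr -scaleN1r mulZr scaleN1r.
Qed.

Variable theta : A -> R[i].
Hypothesis theta_char : is_nonzero_character mul theta.

Lemma character0 : theta 0 = 0.
Proof.
case: theta_char => theta_lin _ _.
by have := theta_lin (-1) 0 0; rewrite scaler0 add0r mulN1r addNr.
Qed.

Lemma characterD a b : theta (a + b) = theta a + theta b.
Proof.
by case: theta_char => theta_lin _ _; have := theta_lin 1 a b; rewrite scale1r mul1r.
Qed.

Lemma character_ne1 b : `|b| < 1 -> theta b != 1.
Proof.
move=> b_lt1; apply/eqP => theta_b.
(* The fixed point p = b + b p of this contraction gives theta p = 1 + theta p. *)
pose phi (x : realified A) : realified A := b + mul b x.
have phi_contraction : is_contraction (totalfun phi).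
  have nb_ge0 : 0 <= `|b : realified A| by [].
  exists (NngNum nb_ge0); split => [|[x y] _] /=.
    by rewrite -(ltcR _ 1) realified_normE.
  rewrite -lecR rmorphM /= !realified_normE /phi opprD addrACA subrr add0r.
  rewrite -banach_mulrB.
  by case: mul_banach => _ [_ [_ [_ [_ mul_le]]]].
have [p _ p_fixed] := banach_fixed_point phi_contraction closedT (ex_intro _ 0 I).
case: theta_char => _ theta_mul _.
have := congr1 theta p_fixed; rewrite /= /phi characterD theta_mul theta_b mul1r.
by move/(canLR (addrK _))/eqP; rewrite subrr eq_sym oner_eq0.
Qed.

Lemma character_norm_le a : `|theta a| <= `|a|.
Proof.
rewrite real_leNgt ?normr_real //; apply/negP => a_lt.
have theta_a0 : theta a != 0 by rewrite -normr_gt0 (le_lt_trans _ a_lt).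
have := character_ne1 (b := (theta a)^-1 *: a).
rewrite normrZ normfV ltr_pdivrMl ?normr_gt0 // mulr1 => /(_ a_lt).
case: theta_char => theta_lin _ _.
by rewrite -[_ *: a]addr0 theta_lin character0 addr0 mulVf ?eqxx.
Qed.

End BanachAlgebra.

Section LauProduct.
Variables (R : realType) (A U X : completeNormedModType R[i]).
Variables (mulA : A -> A -> A) (mulU : U -> U -> U) (theta : A -> R[i]).
Variables (lact : A * U -> X -> X) (ract : X -> A * U -> X).
Hypothesis mulA_banach : is_banach_algebra mulA.
Hypothesis mulU_banach : is_banach_algebra mulU.
Hypothesis theta_char : is_nonzero_character mulA theta.
Hypothesis X_bimodule : is_lau_banach_bimodule mulA mulU theta lact ract.

Local Notation lau_mul := (lau_mul mulA mulU theta).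

Lemma lau_mul_a0_0u a u : lau_mul (a, 0) (0, u) = (0, theta a *: u).
Proof.
rewrite /lau_mul /= (banach_mulr0 mulA_banach) (banach_mul0r mulU_banach).
by rewrite (character0 theta_char) scaler0 !addr0.
Qed.

Lemma lau_mul_0u_a0 a u : lau_mul (0, u) (a, 0) = (0, theta a *: u).
Proof.
rewrite /lau_mul /= (banach_mul0r mulA_banach) (banach_mulr0 mulU_banach).
by rewrite (character0 theta_char) scaler0 add0r addr0.
Qed.

Lemma lact_linear p : linear (lact p).
Proof. by case: X_bimodule => _ [lact_lin _] c; apply: lact_lin. Qed.

Lemma ract_linear p : linear (ract^~ p).
Proof. by case: X_bimodule => _ [_ [_ [ract_lin _]]] c; apply: ract_lin. Qed.

Lemma lact_le p x : `|lact p x| <= (`|p.1| + `|p.2|) * `|x|.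
Proof.
by case: X_bimodule => _ [_ [_ [_ [_ [_ [_ [lact_le _]]]]]]]; apply: lact_le.
Qed.

Lemma ract_le p x : `|ract x p| <= (`|p.1| + `|p.2|) * `|x|.
Proof.
by case: X_bimodule => _ [_ [_ [_ [_ [_ [_ [_ ract_le]]]]]]]; apply: ract_le.
Qed.

Lemma lact_continuous p : continuous (lact p).
Proof. exact: linear_le_continuous (lact_linear p) (addr_ge0 _ _) (lact_le p). Qed.

Lemma ract_continuous p : continuous (ract^~ p).
Proof. exact: linear_le_continuous (ract_linear p) (addr_ge0 _ _) (ract_le p). Qed.

Lemma lact0 p : lact p 0 = 0.
Proof. exact: linear0 (linear_of (lact_linear p)). Qed.

Lemma ract0 p : ract 0 p = 0.
Proof. exact: linear0 (linear_of (ract_linear p)). Qed.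

Variable D : A * U -> X.
Hypothesis D_derivation : is_lau_derivation mulA mulU theta lact ract D.

Definition delta1 (a : A) : X := D (a, 0).
Definition delta2 (u : U) : X := D (0, u).

Lemma delta1_linear : linear delta1.
Proof.
case: D_derivation => D_lin _ c a b.
by have := D_lin c (a, 0) (b, 0); rewrite /lau_lc /= scaler0 addr0.
Qed.

Lemma delta2_linear : linear delta2.
Proof.
case: D_derivation => D_lin _ c u v.
by have := D_lin c (0, u) (0, v); rewrite /lau_lc /= scaler0 addr0.
Qed.

Lemma D_split a u : D (a, u) = delta1 a + delta2 u.
Proof.
case: D_derivation => D_lin _.
by have := D_lin 1 (a, 0) (0, u); rewrite /lau_lc /= !scale1r addr0 add0r.
Qed.

Lemma delta2Z c u : delta2 (c *: u) = c *: delta2 u.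
Proof.
have delta2_0 : delta2 0 = 0 := linear0 (linear_of delta2_linear).
by rewrite -[c *: u]addr0 delta2_linear delta2_0 addr0.
Qed.

Lemma ract_delta1 a u :
  ract (delta1 a) (0, u) = theta a *: delta2 u - lact (a, 0) (delta2 u).
Proof.
case: D_derivation => _ D_mul.
by rewrite -delta2Z /delta2 -lau_mul_a0_0u D_mul addrK.
Qed.

Lemma lact_delta1 a u :
  lact (0, u) (delta1 a) = theta a *: delta2 u - ract (delta2 u) (a, 0).
Proof.
case: D_derivation => _ D_mul.
by rewrite -delta2Z /delta2 -lau_mul_0u_a0 D_mul addrAC subrr add0r.
Qed.

Lemma lact_delta1_le a u : `|lact (0, u) (delta1 a)| <= (`|delta2 u| *+ 2) * `|a|.
Proof.
rewrite lact_delta1.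
apply: ler_norm_scaleB (character_norm_le mulA_banach theta_char a) _.
by have := ract_le (a, 0) (delta2 u); rewrite normr0 addr0.
Qed.

Lemma ract_delta1_le a u : `|ract (delta1 a) (0, u)| <= (`|delta2 u| *+ 2) * `|a|.
Proof.
rewrite ract_delta1.
apply: ler_norm_scaleB (character_norm_le mulA_banach theta_char a) _.
by have := lact_le (a, 0) (delta2 u); rewrite normr0 addr0.
Qed.

Lemma delta1_continuous (I J : Type) (l : I -> U) (r : J -> U) :
  (forall x, (forall i, lact (0, l i) x = 0) -> (forall j, ract x (0, r j) = 0) ->
     x = 0) ->
  continuous delta1.
Proof.
move=> lr_sep.
pose S (k : I + J) (x : X) :=
  match k with inl i => lact (0, l i) x | inr j => ract x (0, r j) end.
apply: (separating_continuous (S := S) delta1_linear).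
- by case=> k; [exact: lact_continuous | exact: ract_continuous].
- by case=> k; [exact: lact0 | exact: ract0].
- by move=> x Sx; apply: lr_sep => [i|j]; [apply: (Sx (inl i)) | apply: (Sx (inr j))].
case=> [i|j].
- apply: (linear_le_continuous (linear_comp delta1_linear (lact_linear _))
    (mulrn_wge0 2 (normr_ge0 (delta2 (l i))))).
  by move=> a; exact: (lact_delta1_le a (l i)).
- apply: (linear_le_continuous (linear_comp delta1_linear (ract_linear _))
    (mulrn_wge0 2 (normr_ge0 (delta2 (r j))))).
  by move=> a; exact: (ract_delta1_le a (r j)).
Qed.

Lemma delta1_continuous_ann : (forall x, ann_X_U lact ract x -> x = 0) ->
  continuous delta1.
Proof.
move=> ann_trivial.
apply: (delta1_continuous (l := @id U) (r := @id U)) => x l0 r0.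
by apply: ann_trivial => u; split; [exact: l0 | exact: r0].
Qed.

Lemma delta1_continuous_left_bai : has_left_bai_for_X lact -> continuous delta1.
Proof.
case=> I [le [e [[_ le_refl _ _] _ e_approx]]].
apply: (delta1_continuous (l := e) (r := @of_void U)) => x ex0 _.
apply/eqP; apply: contraT; rewrite -normr_gt0.
move=> /(e_approx x)[i0 /(_ i0 (le_refl i0))].
by rewrite ex0 sub0r normrN ltxx.
Qed.

Lemma delta1_continuous_right_bai : has_right_bai_for_X ract -> continuous delta1.
Proof.
case=> I [le [e [[_ le_refl _ _] _ e_approx]]].
apply: (delta1_continuous (l := @of_void U) (r := e)) => x _ xe0.
apply/eqP; apply: contraT; rewrite -normr_gt0.
move=> /(e_approx x)[i0 /(_ i0 (le_refl i0))].
by rewrite xe0 sub0r normrN ltxx.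
Qed.

Lemma commutator_delta2 a u :
  lact (a, 0) (delta2 u) - ract (delta2 u) (a, 0) =
  lact (0, u) (delta1 a) - ract (delta1 a) (0, u).
Proof. by rewrite lact_delta1 ract_delta1 opprB [RHS]addrC addrA subrK. Qed.

Lemma commutator_delta2_le a u :
  `|lact (a, 0) (delta2 u) - ract (delta2 u) (a, 0)| <= (`|delta1 a| *+ 2) * `|u|.
Proof.
rewrite commutator_delta2 mulr2n mulrDl; apply: le_trans (ler_normB _ _) _.
apply: lerD; rewrite mulrC.
  by have := lact_le (0, u) (delta1 a); rewrite normr0 add0r.
by have := ract_le (0, u) (delta1 a); rewrite normr0 add0r.
Qed.

Lemma delta2_continuous : (forall x, Z_X_A lact ract x -> x = 0) ->
  continuous delta2.
Proof.
move=> Z_trivial; pose S (a : A) (x : X) := lact (a, 0) x - ract x (a, 0).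
apply: (separating_continuous (S := S) delta2_linear).
- move=> a x.
  by apply: continuousB; [exact: lact_continuous | exact: ract_continuous].
- by move=> a; rewrite /S lact0 ract0 subr0.
- move=> x Sx; apply: Z_trivial => a.
  by apply/eqP; rewrite -subr_eq0; apply/eqP; apply: Sx.
move=> a; apply: (linear_le_continuous _ (mulrn_wge0 2 (normr_ge0 (delta1 a)))).
  apply: linear_comp delta2_linear _ => c x y.
  by rewrite /S lact_linear ract_linear opprD addrACA scalerBr.
by move=> u; exact: (commutator_delta2_le a u).
Qed.

Lemma D_continuous : continuous delta1 -> continuous delta2 -> continuous D.
Proof.
move=> delta1_cont delta2_cont.
have -> : D = (delta1 \o fst) + (delta2 \o snd).
  by apply/funext => -[a u]; rewrite D_split.
move=> p; apply: continuousD.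
  exact: continuous_comp cvg_fst (delta1_cont _).
exact: continuous_comp cvg_snd (delta2_cont _).
Qed.

End LauProduct.

Theorem theorem2p6 (R : realType)
  (A U : completeNormedModType R[i])
  (mulA : A -> A -> A) (mulU : U -> U -> U) (theta : A -> R[i])
  (X : completeNormedModType R[i])
  (lact : A * U -> X -> X) (ract : X -> A * U -> X) :
  is_banach_algebra mulA ->
  is_banach_algebra mulU ->
  is_nonzero_character mulA theta ->
  is_lau_banach_bimodule mulA mulU theta lact ract ->
  (forall D : A * U -> X,
     is_lau_derivation mulA mulU theta lact ract D ->
     (* (i) *)
     ((forall x : X, ann_X_U lact ract x -> x = 0)
        \/ has_left_bai_for_X lact
        \/ has_right_bai_for_X ract ->
      continuous (fun a : A => D (a, 0))) /\
     (* (ii), first part *)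
     ((forall x : X, Z_X_A lact ract x -> x = 0) ->
      continuous (fun u : U => D (0, u)))) /\
  (* (ii), second part: every derivation is continuous *)
  ((forall x : X, Z_X_A lact ract x -> x = 0) ->
   (forall x : X, ann_X_U lact ract x -> x = 0) ->
   forall D : A * U -> X,
     is_lau_derivation mulA mulU theta lact ract D -> continuous D).
Proof.
move=> A_banach U_banach theta_char X_bimod.
split=> [D D_der | Z_trivial ann_trivial D D_der].
  split=> [[ann_trivial | [left_bai | right_bai]] | Z_trivial].
  - exact: (delta1_continuous_ann A_banach U_banach theta_char X_bimod D_der).
  - exact: (delta1_continuous_left_bai A_banach U_banach theta_char X_bimod D_der).
  - exact: (delta1_continuous_right_bai A_banach U_banach theta_char X_bimod D_der).
  - exact: (delta2_continuous A_banach U_banach theta_char X_bimod D_der).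
have delta1_cont := delta1_continuous_ann A_banach U_banach theta_char X_bimod
  D_der ann_trivial.
have delta2_cont := delta2_continuous A_banach U_banach theta_char X_bimod
  D_der Z_trivial.
exact: (D_continuous D_der).
Qed.
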